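(* Let $s\ge1$, let $q$ be a prime power and let $C^{(1)},\ldots,C^{(s)}\in\mathbb{F}_q^{\mathbb{N}\times\mathbb{N}_0}$ be finite-row generating matrices. Let $\mathbf{T}:\mathbb{N}_0\to\mathbb{N}_0$ with $\mathbf{T}(m)\le m$. If $C^{(1)},\ldots,C^{(s)}$ generate a $(\mathbf{T},s)$-sequence in base $q$ via Algorithm 1 (for some admissible choice of the bijections), then, for every choice of bijections $\psi_r$, $\lambda_{i,j}$, Algorithm 2 based on these matrices and the input sequence $(s_n)_{n\ge0}=(-n-1)_{n\ge0}$ (viewed in $\mathbb{Z}_q$) produces a $(\mathbf{T},s)$-sequence in base $q$.
   Context: $\mathbb{F}_q$ is the finite field with $q$ elements, $D_q=\{0,\ldots,q-1\}$; $\mathbb{Z}_q$ is the ring of $q$-adic integers, each $z\in\mathbb{Z}_q$ having a unique representation $z=\sum_{r\ge0}a_rq^r$, $a_r\in D_q$ (e.g. $-1=\sum_r(q-1)q^r$). A matrix $(c^{(i)}_{j,r})_{j\ge1,r\ge0}$ is finite-row if each row has finitely many nonzero entries. Algorithm 2: choose bijections $\psi_r:D_q\to\mathbb{F}_q$ ($r\ge0$), finite-row matrices $C^{(i)}=(c^{(i)}_{j,r})$, bijections $\lambda_{i,j}:\mathbb{F}_q\to D_q$ ($1\le i\le s$, $j\ge1$) and $(s_n)$ in $\mathbb{Z}_q$; with $s_n=\sum_ra_rq^r$ put $x_n^{(i)}=\sum_{j\ge1}\lambda_{i,j}(\sum_rc^{(i)}_{j,r}\psi_r(a_r))q^{-j}$,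 $\boldsymbol{x}_n=(x_n^{(1)},\ldots,x_n^{(s)})\in[0,1]^s$. Algorithm 1 is the same with $s_n=n$ and $\psi_r(0)=0$ for all large $r$. The $m$-digit truncation $[x_n^{(i)}]_{q,m}=\sum_{j=1}^m\lambda_{i,j}(\cdots)q^{-j}$ (truncation of this digit expansion), applied coordinatewise. Elementary interval in base $q$: $\prod_{i=1}^s[a_iq^{-d_i},(a_i+1)q^{-d_i})$, $d_i\ge0$, $0\le a_i<q^{d_i}$. For $0\le t\le m$, a $(t,m,s)$-net in base $q$ is a set of $q^m$ points in $[0,1)^s$ with exactly $q^t$ points in every elementary interval of volume $q^{t-m}$. A sequence $(\boldsymbol{x}_n)$ is a $(\mathbf{T},s)$-sequence in base $q$ if for all $k\ge0$ and $m$ with $\mathbf{T}(m)<m$ the points $[\boldsymbol{x}_n]_{q,m}$, $kq^m\le n<(k+1)q^m$, form a $(\mathbf{T}(m),m,s)$-net in base $q$. For Algorithm 1 over $\mathbb{F}_q$, producing a $(\mathbf{T},s)$-sequence is equivalent to: for every $m$ with $m>\mathbf{T}(m)$ and all integers $d_1,\ldots,d_s\ge0$ with $1\le d_1+\cdots+d_s\le m-\mathbf{T}(m)$, the vectors $(c^{(i)}_{j,0},\ldots,c^{(i)}_{j,m-1})\in\mathbb{F}_q^m$, $1\le j\le d_i$, $1\le i\le s$, are linearly independent. *)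

From mathcomp Require Import all_boot all_order all_algebra.
Set Implicit Arguments. Unset Strict Implicit. Unset Printing Implicit Defensive.
Import Order.TTheory GRing.Theory Num.Theory.
Local Open Scope ring_scope.

(* r-th digit (r >= 0) of the q-adic expansion of an integer z, viewed in Z_q:
   z = sum_r a_r q^r with a_r in {0,..,q-1}; a_r = floor((z mod q^(r+1)) / q^r). *)
Definition qdigit (q : nat) (z : int) (r : nat) : nat :=
  `|((z %% (q ^ r.+1)%N%:Z)%Z %/ (q ^ r)%N%:Z)%Z|%N.

(* psi : D_q -> F is a bijection (values outside D_q = {0..q-1} are irrelevant) *)
Definition bij_DF (F : finFieldType) (psi : nat -> F) : Prop :=
  (forall a b, (a < #|F|)%N -> (b < #|F|)%N -> psi a = psi b -> a = b) /\
  (forall y : F, exists2 a, (a < #|F|)%N & psi a = y).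

Definition bij_FD (F : finFieldType) (lam : F -> nat) : Prop :=
  (forall y, (lam y < #|F|)%N) /\ injective lam /\
  (forall a, (a < #|F|)%N -> exists y, lam y = a).

(* Finite-row generating matrices: C i j is the finite list of (possibly)
   nonzero entries of row j (rows j >= 1; row 0 is unused) of C^(i+1);
   entry c^{(i+1)}_{j,r} = (C i j)`_r, which is 0 for r >= size (C i j). *)
Definition gen_mats (F : finFieldType) (s : nat) := 'I_s -> nat -> seq F.

(* j-th digit (in F_q, before lambda) of x_n^(i), for the input z = s_n in Z_q *)
Definition alg_digit (F : finFieldType) s (C : gen_mats F s) (psi : nat -> nat -> F)
  (z : int) (i : 'I_s) (j : nat) : F :=
  \sum_(r < size (C i j)) (C i j)`_r * psi r (qdigit #|F| z r).

Definition alg_point_trunc (F : finFieldType) s (C : gen_mats F s)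
  (psi : nat -> nat -> F) (lam : 'I_s -> nat -> F -> nat)
  (seqn : nat -> int) (m n : nat) (i : 'I_s) : rat :=
  \sum_(1 <= j < m.+1)
     (lam i j (alg_digit C psi (seqn n) i j))%:R / (#|F| ^ j)%:R.

Definition is_net (q m t s : nat) (P : 'I_(q ^ m) -> 'I_s -> rat) : Prop :=
  (t <= m)%N /\
  (forall n i, 0 <= P n i < 1) /\
  (forall d a : 'I_s -> nat,
     (\sum_(i < s) d i)%N = (m - t)%N ->
     (forall i, (a i < q ^ d i)%N) ->
     #|[set n : 'I_(q ^ m) | [forall i : 'I_s,
          ((a i)%:R / (q ^ d i)%:R <= P n i) &&
          (P n i < (a i).+1%:R / (q ^ d i)%:R)]]| = (q ^ t)%N).

Arguments is_net : clear implicits.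

(* (T,s)-sequence in base q, given the m-digit truncations X m n i of x_n^(i) *)
Definition is_Tseq (q s : nat) (T : nat -> nat) (X : nat -> nat -> 'I_s -> rat) : Prop :=
  forall k m : nat, (T m < m)%N ->
    is_net q m (T m) s (fun (n : 'I_(q ^ m)) i => X m (k * q ^ m + n)%N i).

Arguments is_Tseq : clear implicits.

Definition admissible2 (F : finFieldType) s (psi : nat -> nat -> F)
  (lam : 'I_s -> nat -> F -> nat) : Prop :=
  (forall r, bij_DF (psi r)) /\ (forall i j, (1 <= j)%N -> bij_FD (lam i j)).

Definition admissible1 (F : finFieldType) s (psi : nat -> nat -> F)
  (lam : 'I_s -> nat -> F -> nat) : Prop :=
  admissible2 psi lam /\ exists R, forall r, (R <= r)%N -> psi r 0%N = 0.

From mathcomp Require Import all_boot all_order all_algebra.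
From mathcomp Require Import zify ring.
Import Order.TTheory GRing.Theory Num.Theory.
Set Implicit Arguments. Unset Strict Implicit. Unset Printing Implicit Defensive.

(* For N >= 0 the q-adic digits of -N-1 are the complements q-1-a_r of the
   digits a_r of N, so Algorithm 2 on (-n-1) is the same construction applied to
   (n), with psi_r replaced by a |-> psi_r(q-1-a).  For k q^m <= n < (k+1) q^m the
   m lowest digits of n run through D_q^m while the others are fixed by k, so the
   F_q-digits of x_n are G b + c, with b ranging over F_q^m, G determined by the
   matrices alone and c depending on k and psi.  A point lies in an elementary
   interval iff finitely many of its digits take prescribed values, and the
   number of b for which G b + c takes prescribed values is unchanged when c and
   the values are translated together.  Hence every count equals a count for
   Algorithm 1 on the block k = 0, which is q^t. *)

(* The base-q numeral [e 0; e 1; ...; e d.-1], most significant digit first. *)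
Fixpoint nat_of_digits (q : nat) (e : nat -> nat) (d : nat) : nat :=
  if d is d'.+1 then nat_of_digits q e d' * q + e d' else 0.

Lemma eq_nat_of_digits q e e' d :
  (forall j, j < d -> e j = e' j) -> nat_of_digits q e d = nat_of_digits q e' d.
Proof. by elim: d => [|d IHd] //= eq_e; rewrite IHd ?eq_e // => j /ltnW/eq_e. Qed.

Lemma nat_of_digits_lt q e d :
  0 < q -> (forall j, j < d -> e j < q) -> nat_of_digits q e d < q ^ d.
Proof.
move=> q_gt0; elim: d => [|d IHd] //= e_lt; rewrite expnS.
have := IHd (fun j lt_jd => e_lt j (ltnW lt_jd)); have := e_lt d (ltnSn d); nia.
Qed.

Lemma nat_of_digitsD q e d k :
  nat_of_digits q e (d + k) =
  nat_of_digits q e d * q ^ k + nat_of_digits q (fun j => e (d + j)) k.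
Proof.
elim: k => [|k IHk] /=; first by rewrite addn0 expn0 muln1 addn0.
by rewrite addnS /= IHk expnS; ring.
Qed.

Lemma nat_of_digits_inj q e e' d :
  (forall j, j < d -> e j < q) -> (forall j, j < d -> e' j < q) ->
  nat_of_digits q e d = nat_of_digits q e' d -> forall j, j < d -> e j = e' j.
Proof.
elim: d => [|d IHd] //= e_lt e'_lt eq_val j.
have q_gt0 : 0 < q by have := e_lt d (ltnSn d); lia.
have eq_hi : nat_of_digits q e d = nat_of_digits q e' d.
  have := congr1 (divn^~ q) eq_val.
  by rewrite !divnMDl // !divn_small ?e_lt ?e'_lt // !addn0.
have eq_lo : e d = e' d by move: eq_val; rewrite eq_hi => /addnI.
rewrite ltnS leq_eqVlt => /predU1P[-> //|lt_jd].
by apply: IHd lt_jd => // i lt_id; [apply: e_lt | apply: e'_lt]; lia.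
Qed.

Lemma nat_of_digits_onto q d a : 0 < q -> a < q ^ d ->
  {e : nat -> nat | (forall j, j < d -> e j < q) & nat_of_digits q e d = a}.
Proof.
move=> q_gt0; elim: d a => [|d IHd] a lt_a.
  by exists (fun=> 0) => //; move: lt_a; rewrite expn0; case: a.
have [|e e_lt e_val] := IHd (a %/ q); first by rewrite ltn_divLR // -expnSr.
exists (fun j => if j == d then a %% q else e j) => [j lt_jd|/=].
  by case: eqP => [_|/eqP ne_jd]; [rewrite ltn_mod | apply: e_lt; lia].
rewrite eqxx (@eq_nat_of_digits _ _ e) ?e_val -?divn_eq // => j lt_jd.
by rewrite ifN // ltn_eqF.
Qed.

Definition digitn (q N r : nat) : nat := (N %/ q ^ r) %% q.

Lemma digitn_lt q N r : 0 < q -> digitn q N r < q.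
Proof. exact: ltn_pmod. Qed.

Lemma digitnE q N r : 0 < q -> (N %% q ^ r.+1) %/ q ^ r = digitn q N r.
Proof.
move=> q_gt0; rewrite divn_modl; last by rewrite expnS dvdn_mull.
by rewrite expnS mulnK // expn_gt0 q_gt0.
Qed.

Lemma qdigit_nat q N r : 0 < q -> qdigit q N%:Z r = digitn q N r.
Proof. by move=> q_gt0; rewrite /qdigit modz_nat divz_nat absz_nat digitnE. Qed.

Lemma complement_divn q Q x : 0 < Q -> x < q * Q ->
  (q * Q - 1 - x) %/ Q = q - 1 - x %/ Q.
Proof.
move=> Q_gt0 lt_x; have lt_hi : x %/ Q < q by rewrite ltn_divLR // mulnC.
have lt_lo := ltn_pmod x Q_gt0.
have -> : q * Q - 1 - x = (q - 1 - x %/ Q) * Q + (Q - 1 - x %% Q).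
  rewrite {1}(divn_eq x Q) {1}(_ : q = (q - 1 - x %/ Q) + x %/ Q + 1); last by lia.
  by rewrite !mulnDl mul1n; lia.
by rewrite divnMDl // (@divn_small (Q - 1 - _)) ?addn0 //; lia.
Qed.

Lemma qdigit_opp q N r : 0 < q ->
  qdigit q (- N%:Z - 1)%R r = q - 1 - digitn q N r.
Proof.
move=> q_gt0; have Q_gt0 : 0 < q ^ r.+1 by rewrite expn_gt0 q_gt0.
have -> : (- N%:Z - 1)%R = Negz N by rewrite NegzE -addn1 PoszD opprD.
have lt_N := ltn_pmod N Q_gt0.
rewrite /qdigit modNz_nat //.
have -> : (Posz (q ^ r.+1) - 1 - Posz (N %% q ^ r.+1))%R =
          Posz (q ^ r.+1 - 1 - N %% q ^ r.+1) by lia.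
by rewrite divz_nat absz_nat expnS complement_divn -?expnS ?digitnE ?expn_gt0 ?q_gt0.
Qed.

Lemma digitn_low q k m n r : 0 < q -> r < m ->
  digitn q (k * q ^ m + n) r = digitn q n r.
Proof.
move=> q_gt0 lt_rm; rewrite /digitn.
have -> : k * q ^ m = (k * q ^ (m - r).-1 * q) * q ^ r.
  by rewrite -!mulnA -expnS -expnD; congr (_ * q ^ _); lia.
by rewrite divnMDl ?expn_gt0 ?q_gt0 // modnMDl.
Qed.

Lemma digitn_high q k m n r : 0 < q -> n < q ^ m -> m <= r ->
  digitn q (k * q ^ m + n) r = digitn q (k * q ^ m) r.
Proof.
move=> q_gt0 lt_n le_mr; rewrite /digitn -(subnKC le_mr) expnD !divnMA.
by rewrite divnMDl ?mulnK ?expn_gt0 ?q_gt0 // (divn_small lt_n) addn0.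
Qed.

Lemma digitn_inj q m n n' : 0 < q -> n < q ^ m -> n' < q ^ m ->
  (forall r, r < m -> digitn q n r = digitn q n' r) -> n = n'.
Proof.
move=> q_gt0; elim: m n n' => [|m IHm] n n' lt_n lt_n' eq_dig.
  by move: lt_n lt_n'; rewrite expn0; lia.
have digitnS x r : digitn q x r.+1 = digitn q (x %/ q) r by rewrite /digitn expnS divnMA.
have eq_mod : n %% q = n' %% q by have := eq_dig 0 isT; rewrite /digitn expn0 !divn1.
have eq_div : n %/ q = n' %/ q.
  by apply: IHm => [||r lt_rm]; rewrite ?ltn_divLR // -?expnSr // -!digitnS eq_dig.
by rewrite (divn_eq n q) (divn_eq n' q) eq_mod eq_div.
Qed.

Lemma mulnD_in_box a h Q r : 0 < Q -> r < Q ->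
  (a * Q <= h * Q + r < a.+1 * Q) = (h == a).
Proof.
move=> Q_gt0 lt_rQ; rewrite -leq_divRL // -ltn_divLR // divnMDl // divn_small //.
by rewrite addn0 ltnS -eqn_leq eq_sym.
Qed.

Local Open Scope ring_scope.

Section DigitExpansions.
Variable R : numFieldType.

Lemma ler_nat_frac (D x y : nat) : (0 < D)%N ->
  ((x%:R / D%:R : R) <= y%:R / D%:R) = (x <= y)%N.
Proof. by move=> D_gt0; rewrite ler_pM2r ?invr_gt0 ?ltr0n // ler_nat. Qed.

Lemma ltr_nat_frac (D x y : nat) : (0 < D)%N ->
  ((x%:R / D%:R : R) < y%:R / D%:R) = (x < y)%N.
Proof. by move=> D_gt0; rewrite ltr_pM2r ?invr_gt0 ?ltr0n // ltr_nat. Qed.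

Lemma nat_frac_scale (x D Q : nat) : (0 < Q)%N ->
  (x%:R / D%:R : R) = (x * Q)%:R / (D * Q)%:R.
Proof.
by move=> Q_gt0; rewrite !natrM -mulf_div divff ?mulr1 // pnatr_eq0 -lt0n.
Qed.

Lemma sum_frac_digits (q m : nat) (g : nat -> nat) : (0 < q)%N ->
  \sum_(1 <= j < m.+1) ((g j)%:R / (q ^ j)%:R : R) =
  (nat_of_digits q (fun j => g j.+1) m)%:R / (q ^ m)%:R.
Proof.
move=> q_gt0; elim: m => [|m IHm]; first by rewrite big_geq // mul0r.
rewrite big_nat_recr //= IHm natrD natrM expnSr natrM.
have q_neq0 : (q%:R : R) != 0 by rewrite pnatr_eq0 -lt0n.
have qm_neq0 : ((q ^ m)%:R : R) != 0 by rewrite pnatr_eq0 -lt0n expn_gt0 q_gt0.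
by field; rewrite q_neq0 qm_neq0.
Qed.

Lemma frac_digits_in_box (q m d a : nat) (g : nat -> nat) : (0 < q)%N ->
  (forall j, (0 < j <= m)%N -> (g j < q)%N) -> (d <= m)%N ->
  (a%:R / (q ^ d)%:R <= \sum_(1 <= j < m.+1) ((g j)%:R / (q ^ j)%:R : R)
                      < a.+1%:R / (q ^ d)%:R)
  = (nat_of_digits q (fun j => g j.+1) d == a).
Proof.
move=> q_gt0 g_lt le_dm; rewrite sum_frac_digits // -(subnKC le_dm) nat_of_digitsD.
have lt_tail : (nat_of_digits q (fun j => g (d + j).+1) (m - d) < q ^ (m - d))%N.
  by apply: nat_of_digits_lt => // j lt_j; apply: g_lt; lia.
have Q_gt0 : (0 < q ^ (m - d))%N by rewrite expn_gt0 q_gt0.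
have D_gt0 : (0 < q ^ d * q ^ (m - d))%N by rewrite muln_gt0 !expn_gt0 q_gt0.
rewrite expnD (nat_frac_scale a _ Q_gt0) (nat_frac_scale a.+1 _ Q_gt0).
by rewrite ler_nat_frac // ltr_nat_frac // mulnD_in_box.
Qed.
Lemma frac_digits_in_unit (q m : nat) (g : nat -> nat) : (0 < q)%N ->
  (forall j, (0 < j <= m)%N -> (g j < q)%N) ->
  0 <= \sum_(1 <= j < m.+1) ((g j)%:R / (q ^ j)%:R : R) < 1.
Proof.
move=> q_gt0 g_lt; rewrite sum_frac_digits // divr_ge0 ?ler0n //=.
rewrite ltr_pdivrMr ?ltr0n ?expn_gt0 ?q_gt0 // mul1r ltr_nat.
by apply: nat_of_digits_lt => // j lt_jm; apply: g_lt; lia.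
Qed.

End DigitExpansions.

Section GeneratingMatrices.
Variables (F : finFieldType) (s : nat) (C : gen_mats F s).
Local Notation q := #|F|.

Lemma card_field_gt0 : (0 < q)%N.
Proof. exact: ltnW (card_finNzRing_gt1 F). Qed.

Definition digit_injective (psi : nat -> nat -> F) : Prop :=
  forall r a b, (a < q)%N -> (b < q)%N -> psi r a = psi r b -> a = b.

Definition lambda_bijective (lam : 'I_s -> nat -> F -> nat) : Prop :=
  forall i j, (1 <= j)%N -> bij_FD (lam i j).

Definition compl_digits (psi : nat -> nat -> F) r a : F := psi r (q - 1 - a)%N.

Lemma compl_digits_injective psi :
  digit_injective psi -> digit_injective (compl_digits psi).
Proof. by move=> psi_inj r a b lt_a lt_b /psi_inj; lia. Qed.

Lemma alg_digit_opp psi N i j :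
  alg_digit C psi (- N%:Z - 1) i j = alg_digit C (compl_digits psi) N%:Z i j.
Proof.
by apply: eq_bigr => r _; rewrite qdigit_opp ?qdigit_nat ?card_field_gt0.
Qed.

(* The point lies in the box prod_i [a_i q^-d_i, (a_i+1) q^-d_i) iff its
   F-digits Y i j (j >= 1, before applying lam) satisfy [box_digits lam d a Y]. *)
Definition box_digits (lam : 'I_s -> nat -> F -> nat) (d a : 'I_s -> nat)
    (Y : 'I_s -> nat -> F) : bool :=
  [forall i, nat_of_digits q (fun j => lam i j.+1 (Y i j.+1)) (d i) == a i].

Definition agree_digits (d : 'I_s -> nat) (Y Y' : 'I_s -> nat -> F) : bool :=
  [forall i, [forall j : 'I_(d i), Y i j.+1 == Y' i j.+1]].

Section BoxDigits.
Variables (lam : 'I_s -> nat -> F -> nat) (d : 'I_s -> nat).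
Hypothesis lam_bij : lambda_bijective lam.

Lemma box_digitsE a Y Y0 :
  box_digits lam d a Y0 -> box_digits lam d a Y = agree_digits d Y Y0.
Proof.
move=> /forallP box_Y0; apply: eq_forallb => i; rewrite -(eqP (box_Y0 i)).
have lam_lt (Y' : 'I_s -> nat -> F) j : (j < d i)%N -> (lam i j.+1 (Y' i j.+1) < q)%N.
  by move=> _; case: (@lam_bij i j.+1 isT) => ->.
apply/eqP/forallP => [/(nat_of_digits_inj (lam_lt Y) (lam_lt Y0)) eqY j | eqY].
  have [_ [lam_inj _]] := @lam_bij i j.+1 isT.
  exact/eqP/lam_inj/eqY/ltn_ord.
by apply: eq_nat_of_digits => j lt_j; rewrite (eqP (eqY (Ordinal lt_j))).
Qed.

Lemma box_digits_witness a :
  (forall i, (a i < q ^ d i)%N) -> exists Y0, box_digits lam d a Y0.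
Proof.
move=> lt_a; pose e i := s2val (nat_of_digits_onto card_field_gt0 (lt_a i)).
exists (fun i j => odflt 0 [pick y | lam i j y == e i j.-1]); apply/forallP => i.
rewrite /e; case: (nat_of_digits_onto _ (lt_a i)) => /= e_i e_lt <-.
apply/eqP/eq_nat_of_digits => j lt_j; case: pickP => [y /eqP //|no_y].
have [_ [_ lam_onto]] := @lam_bij i j.+1 isT.
by have [y lam_y] := lam_onto _ (e_lt j lt_j); move: (no_y y); rewrite lam_y eqxx.
Qed.

End BoxDigits.

Lemma card_box_shift (B : finType) (G : B -> 'I_s -> nat -> F) lam lam' d a c c' :
  lambda_bijective lam -> lambda_bijective lam' -> (forall i, (a i < q ^ d i)%N) ->
  exists2 a', forall i, (a' i < q ^ d i)%N &
    #|[set b | box_digits lam d a (fun i j => G b i j + c i j)]| =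
    #|[set b | box_digits lam' d a' (fun i j => G b i j + c' i j)]|.
Proof.
move=> lam_bij lam'_bij lt_a; have [Y0 box_Y0] := box_digits_witness lam_bij lt_a.
pose Y1 i j := Y0 i j - c i j + c' i j.
exists (fun i => nat_of_digits q (fun j => lam' i j.+1 (Y1 i j.+1)) (d i)).
  move=> i; apply: nat_of_digits_lt card_field_gt0 _ => j _.
  by case: (@lam'_bij i j.+1 isT).
apply: eq_card => b; rewrite !inE (box_digitsE lam_bij _ box_Y0).
rewrite (@box_digitsE lam' d lam'_bij _ _ Y1); last exact/forallP.
apply: eq_forallb => i; apply: eq_forallb => j; rewrite /Y1.
by rewrite -(inj_eq (addIr (- c i j.+1 + c' i j.+1))) addrA addrK addrA.
Qed.

(* For n < q^m, the F-digits of the point of index k q^m + n are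
   [lin_digit (low_digits m psi n) + high_shift m psi k]: the m lowest q-adic
   digits of the index are those of n, the other ones those of k q^m. *)
Definition lin_digit m (b : 'rV[F]_m) (i : 'I_s) (j : nat) : F :=
  \sum_(r < m) (C i j)`_r * b 0 r.

Definition low_digits m (psi : nat -> nat -> F) (n : nat) : 'rV[F]_m :=
  \row_(r < m) psi r (digitn q n r).

Definition high_shift m (psi : nat -> nat -> F) k i j : F :=
  \sum_(r < size (C i j) | (m <= r)%N) (C i j)`_r * psi r (digitn q (k * q ^ m) r).

Lemma sum_ord_lt S m (f : nat -> F) : (forall r, (S <= r)%N -> f r = 0) ->
  \sum_(r < S | (r < m)%N) f r = \sum_(r < m) f r.
Proof.
move=> f_eq0; rewrite (big_ord_widen_cond (S + m) (fun r => r < m)%N f) ?leq_addr //.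
rewrite (big_ord_widen (S + m) f) ?leq_addl // [LHS]big_mkcond [RHS]big_mkcond.
by apply: eq_bigr => r _; case: (r < m)%N; case: ltnP => //= /f_eq0 ->.
Qed.

Lemma alg_digit_block m psi k n i j : (n < q ^ m)%N ->
  alg_digit C psi (k * q ^ m + n)%N%:Z i j =
  lin_digit (low_digits m psi n) i j + high_shift m psi k i j.
Proof.
move=> lt_n; rewrite /alg_digit (bigID (fun r : 'I__ => (r < m)%N)) /=; congr (_ + _).
  rewrite /lin_digit; under [RHS]eq_bigr do rewrite mxE.
  pose low_term r := (C i j)`_r * psi r (digitn q n r).
  rewrite -(@sum_ord_lt (size (C i j)) _ low_term) => [|r le_r];
    last by rewrite /low_term nth_default ?mul0r.
  apply: eq_bigr => r lt_r; rewrite qdigit_nat ?card_field_gt0 //.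
  by rewrite digitn_low ?card_field_gt0.
rewrite /high_shift; under eq_bigl do rewrite -leqNgt.
apply: eq_bigr => r le_r; rewrite qdigit_nat ?card_field_gt0 //.
by rewrite digitn_high ?card_field_gt0.
Qed.

Lemma low_digits_inj m psi :
  digit_injective psi -> injective (fun n : 'I_(q ^ m) => low_digits m psi n).
Proof.
move=> psi_inj n n' /rowP eq_n.
apply/val_inj/(@digitn_inj q m); rewrite ?card_field_gt0 ?ltn_ord // => r lt_rm.
move: (eq_n (Ordinal lt_rm)); rewrite !mxE.
by apply: psi_inj; apply: digitn_lt card_field_gt0.
Qed.

Lemma card_low_digits_preim m psi (P : pred 'rV[F]_m) : digit_injective psi ->
  #|[set n : 'I_(q ^ m) | P (low_digits m psi n)]| = #|[set b | P b]|.
Proof.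
move=> /(@low_digits_inj m) low_inj.
have low_bij : bijective (fun n : 'I_(q ^ m) => low_digits m psi n).
  by apply: (inj_card_bij low_inj); rewrite card_mx card_ord mul1n.
rewrite -(on_card_preimset (onW_bij _ low_bij)).
by apply: eq_card => n; rewrite !inE.
Qed.

Lemma card_block_in_box psi psi' lam (z : nat -> int) k m d a :
  lambda_bijective lam -> digit_injective psi' -> (forall i, (d i <= m)%N) ->
  (forall N i j, alg_digit C psi (z N) i j = alg_digit C psi' N%:Z i j) ->
  #|[set n : 'I_(q ^ m) | [forall i,
      ((a i)%:R / (q ^ d i)%:R <= alg_point_trunc C psi lam z m (k * q ^ m + n)%N i) &&
      (alg_point_trunc C psi lam z m (k * q ^ m + n)%N i < (a i).+1%:R / (q ^ d i)%:R)]]|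
  = #|[set b : 'rV[F]_m |
        box_digits lam d a (fun i j => lin_digit b i j + high_shift m psi' k i j)]|.
Proof.
move=> lam_bij psi'_inj le_dm z_digits.
rewrite -(card_low_digits_preim _ psi'_inj); apply: eq_card => n; rewrite !inE.
apply: eq_forallb => i; rewrite /alg_point_trunc.
under eq_bigr do rewrite z_digits alg_digit_block //.
rewrite frac_digits_in_box ?card_field_gt0 // => j /andP[j_gt0 _].
by case: (@lam_bij i j j_gt0).
Qed.

End GeneratingMatrices.

Unset Implicit Arguments.

Theorem proposition1 (F : finFieldType) (s : nat) (C : gen_mats F s)
  (T : nat -> nat) :
  (1 <= s)%N ->
  (forall m, (T m <= m)%N) ->
  (exists (psi1 : nat -> nat -> F) (lam1 : 'I_s -> nat -> F -> nat),
     admissible1 psi1 lam1 /\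
     is_Tseq #|F| s T (alg_point_trunc C psi1 lam1 (fun n : nat => n%:Z))) ->
  forall (psi : nat -> nat -> F) (lam : 'I_s -> nat -> F -> nat),
    admissible2 psi lam ->
    is_Tseq #|F| s T (alg_point_trunc C psi lam (fun n : nat => - (n%:Z) - 1)).
Proof.
move=> _ _ [psi1 [lam1 [[[psi1_bij lam1_bij] _] net1]]] psi lam [psi_bij lam_bij].
move=> k m lt_Tm; split; first exact: ltnW.
split=> [n i | d a sum_d lt_a].
  apply: frac_digits_in_unit (card_field_gt0 F) _ => j /andP[j_gt0 _].
  by case: (lam_bij i j j_gt0).
have le_dm i : (d i <= m)%N.
  by rewrite (leq_trans _ (leq_subr (T m) m)) // -sum_d (bigD1 i) //= leq_addr.
have psi_inj : digit_injective (compl_digits psi).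
  by apply: compl_digits_injective => r; case: (psi_bij r).
rewrite (card_block_in_box _ _ lam_bij psi_inj le_dm (alg_digit_opp C psi)).
have [a' lt_a' ->] := card_box_shift (@lin_digit F s C m)
  (high_shift C m (compl_digits psi) k) (high_shift C m psi1 0) lam_bij lam1_bij lt_a.
have psi1_inj : digit_injective psi1 by move=> r; case: (psi1_bij r).
rewrite -(@card_block_in_box F s C psi1 psi1 lam1 (fun n => n%:Z) 0 m d a') //.
by have [_ [_ ->]] := net1 0%N m lt_Tm.
Qed.
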